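(* Let $G$ be a nontrivial finite group, $1\ne g\in G$, and $S=\mathscr M(G,2,2,C)$ with $C=\begin{bmatrix}1&1\\1&g\end{bmatrix}$. Then both the minimal degree of a faithful action of $S$ by partial transformations and by total transformations equal $\min\{2\deg(\rho)-|\mathrm{Fix}(\rho(g))|\}$, as $\rho$ runs over all faithful permutation representations of $G$ (equivalently, all faithful permutation representations with no two isomorphic orbits).
   Context: The Rees matrix semigroup $\mathscr M(G,2,2,C)$ is $\{1,2\}\times G\times\{1,2\}$ with $(i,h,j)(k,h',l)=(i,hC_{jk}h',l)$. The minimal degree of a faithful action by partial (resp. total) transformations is the least $m$ such that $S$ embeds in the monoid of partial (resp. total) maps of an $m$-set acting on the right. $\deg(\rho)$ is the number of points permuted and $\mathrm{Fix}(\rho(g))$ the set of fixed points of $\rho(g)$. *)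

From mathcomp Require Import all_boot all_fingroup.
Set Implicit Arguments. Unset Strict Implicit. Unset Printing Implicit Defensive.
Import GroupScope.

(* The group G is the whole finGroupType gT. *)
(* Indices {1,2} are modelled by 'I_2 : index "1" = ord0, index "2" = ord_max. *)
Definition RM (gT : finGroupType) := ('I_2 * gT * 'I_2)%type.

Definition sandwich (gT : finGroupType) (g : gT) (j k : 'I_2) : gT :=
  if (j == ord_max) && (k == ord_max) then g else 1.

Definition rm_mul (gT : finGroupType) (g : gT) (s t : RM gT) : RM gT :=
  let: (i, h, j) := s in let: (k, h', l) := t in (i, h * sandwich g j k * h', l).

(* Faithful action by partial transformations of an m-set, acting on the right:
   an injective semigroup homomorphism into the partial transformation monoid,
   x.(st) = (x.s).t *)
Definition faithful_partial_action (gT : finGroupType) (g : gT) (m : nat)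
  (phi : RM gT -> 'I_m -> option 'I_m) : Prop :=
  (forall s t x, phi (rm_mul g s t) x = obind (phi t) (phi s x)) /\
  (forall s t, (forall x, phi s x = phi t x) -> s = t).

Definition faithful_total_action (gT : finGroupType) (g : gT) (m : nat)
  (phi : RM gT -> 'I_m -> 'I_m) : Prop :=
  (forall s t x, phi (rm_mul g s t) x = phi t (phi s x)) /\
  (forall s t, (forall x, phi s x = phi t x) -> s = t).

Definition has_partial_degree (gT : finGroupType) (g : gT) (m : nat) : Prop :=
  exists phi, @faithful_partial_action gT g m phi.

Definition has_total_degree (gT : finGroupType) (g : gT) (m : nat) : Prop :=
  exists phi, @faithful_total_action gT g m phi.

Definition is_least (P : nat -> Prop) (d : nat) : Prop :=
  P d /\ forall m, P m -> d <= m.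

Definition faithful_perm_rep (gT : finGroupType) (n : nat)
  (rho : gT -> {perm 'I_n}) : Prop :=
  {morph rho : x y / x * y} /\ injective rho.

Definition fixpts (n : nat) (p : {perm 'I_n}) : {set 'I_n} := [set x | p x == x].

Definition rep_orbit (gT : finGroupType) (n : nat) (rho : gT -> {perm 'I_n})
  (x : 'I_n) : {set 'I_n} := [set rho h x | h : gT].

Definition iso_orbits (gT : finGroupType) (n : nat) (rho : gT -> {perm 'I_n})
  (x y : 'I_n) : Prop :=
  exists f : 'I_n -> 'I_n,
    [/\ {in rep_orbit rho x, forall z, f z \in rep_orbit rho y},
        {in rep_orbit rho x &, injective f},
        {in rep_orbit rho y, forall w, exists2 z, z \in rep_orbit rho x & f z = w}
      & {in rep_orbit rho x, forall z h, f (rho h z) = rho h (f z)}].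

Definition no_iso_orbits (gT : finGroupType) (n : nat) (rho : gT -> {perm 'I_n}) : Prop :=
  forall x y, rep_orbit rho x != rep_orbit rho y -> ~ iso_orbits rho x y.

Definition rep_value (gT : finGroupType) (g : gT) (d : nat) : Prop :=
  exists n (rho : gT -> {perm 'I_n}),
    faithful_perm_rep rho /\ d = 2 * n - #|fixpts (rho g)|.

Definition rep_value_noiso (gT : finGroupType) (g : gT) (d : nat) : Prop :=
  exists n (rho : gT -> {perm 'I_n}),
    [/\ faithful_perm_rep rho, no_iso_orbits rho & d = 2 * n - #|fixpts (rho g)|].

From mathcomp Require Import all_boot all_fingroup.
From mathcomp Require Import zify.
From Stdlib Require Import Classical.
Set Implicit Arguments. Unset Strict Implicit. Unset Printing Implicit Defensive.
Import GroupScope.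

(* Lower bound: in a faithful partial action of S on m points, the maximal
   subgroup {(1,h,1)} acts by permutations on the set Z1 of points fixed by its
   identity (1,1,1); this gives a faithful representation rho of G. The identity
   (2,g^-1,2) of the maximal subgroup at (2,2) fixes a set Z2 into which (1,1,2)
   maps Z1 injectively, and rho(g) fixes Z1 :&: Z2 pointwise, so
   2 deg(rho) - |Fix(rho(g))| <= |Z1 :|: Z2| <= m.
   Upper bound: a faithful rho of degree n gives a faithful total action on two
   copies of the n points glued along Fix(rho(g)), via
   (k,w)(i,h,j) = (j, w rho(C_ki h)); the gluing is compatible because every
   C_ki is 1 or g.
   Deleting an orbit isomorphic to another one keeps rho faithful and lowers
   2 deg(rho) - |Fix(rho(g))|, so a minimising rho has no isomorphic orbits. *)

Lemma ord2P (k : 'I_2) : k = ord0 \/ k = ord_max.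
Proof. by case: k => [[|[|]]] // Hk; [left | right]; apply: val_inj. Qed.

Section Sandwich.
Variables (gT : finGroupType) (g : gT).

Lemma sandwich0l k : sandwich g ord0 k = 1. Proof. by []. Qed.

Lemma sandwich0r j : sandwich g j ord0 = 1.
Proof. by rewrite /sandwich andbF. Qed.

Lemma sandwich_max : sandwich g ord_max ord_max = g. Proof. by []. Qed.

Lemma sandwichP j k : sandwich g j k = 1 \/ sandwich g j k = g.
Proof. by rewrite /sandwich; case: ifP; [right | left]. Qed.

End Sandwich.

Section PartialGroupAction.
Variables (gT : finGroupType) (X : finType) (act : gT -> X -> option X).
Hypothesis actM : forall a b x, act (a * b) x = obind (act b) (act a x).

Definition fix1 : {set X} := [set x | act 1 x == Some x].

Lemma act_fix1 a x y : act a x = Some y -> y \in fix1.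
Proof. by move=> Eax; rewrite inE; have := actM a 1 x; rewrite mulg1 Eax /= => <-. Qed.

Lemma act_fix1_defined a x : x \in fix1 -> exists2 y, act a x = Some y & y \in fix1.
Proof.
rewrite inE => /eqP x1.
case Eax: (act a x) => [y|]; last by have := actM a a^-1 x; rewrite mulgV x1 Eax.
by exists y; last exact: act_fix1 Eax.
Qed.

Definition fix1_act a (x : {x | x \in fix1}) : {x | x \in fix1} :=
  insubd x (odflt (val x) (act a (val x))).

Lemma fix1_actE a x : act a (val x) = Some (val (fix1_act a x)).
Proof.
have [y Ey fy] := act_fix1_defined a (valP x).
by rewrite /fix1_act Ey /= insubdK.
Qed.

Lemma fix1_actM a b x : fix1_act (a * b) x = fix1_act b (fix1_act a x).
Proof. by apply: val_inj; apply: Some_inj; rewrite -!fix1_actE actM fix1_actE. Qed.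

Lemma fix1_act1 x : fix1_act 1 x = x.
Proof.
by apply: val_inj; apply: Some_inj; have := valP x; rewrite inE -fix1_actE => /eqP.
Qed.

Lemma fix1_act_inj a : injective (fix1_act a).
Proof.
by apply: (can_inj (g := fix1_act a^-1)) => x; rewrite -fix1_actM mulgV fix1_act1.
Qed.

Definition fix1_perm a : {perm {x | x \in fix1}} := perm (@fix1_act_inj a).

Lemma fix1_permE a x : fix1_perm a x = fix1_act a x.
Proof. exact: permE. Qed.

Lemma fix1_permM : {morph fix1_perm : a b / a * b}.
Proof. by move=> a b; apply/permP => x; rewrite permM !fix1_permE fix1_actM. Qed.

(* Every act a factors through act 1, whose image lies in fix1. *)
Lemma fix1_perm_inj_act a b : fix1_perm a = fix1_perm b -> act a =1 act b.
Proof.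
move=> Eab x; rewrite -[a]mul1g -[b]mul1g !actM.
case Ex: (act 1 x) => [y|] //=.
have fy : y \in fix1 := act_fix1 Ex.
by rewrite -[y]/(val (exist _ y fy)) !fix1_actE -!fix1_permE Eab.
Qed.

End PartialGroupAction.

Section Transfer.
Variables (gT : finGroupType) (g : gT).

Lemma perm_rep1 (T : finType) (rho : gT -> {perm T}) :
  {morph rho : x y / x * y} -> rho 1 = 1.
Proof. by move=> rhoM; apply: (mulgI (rho 1)); rewrite -rhoM !mulg1. Qed.

Lemma rep_value_finType (T : finType) (rho : gT -> {perm T}) :
  {morph rho : x y / x * y} -> injective rho ->
  rep_value g (2 * #|T| - #|[set x | rho g x == x]|).
Proof.
move=> rhoM rho_inj.
pose f h (i : 'I_#|T|) := enum_rank (rho h (enum_val i)).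
have f_inj h : injective (f h).
  by move=> i j; rewrite /f => /enum_rank_inj /perm_inj /enum_val_inj.
pose rho' h : {perm 'I_#|T|} := perm (f_inj h).
have rho'E h x : rho' h (enum_rank x) = enum_rank (rho h x).
  by rewrite permE /f enum_rankK.
exists #|T|, rho'; split; last first.
  congr (_ - _); rewrite -(card_imset _ (@enum_rank_inj T)); apply: eq_card => i.
  rewrite -[i]enum_valK mem_imset; last exact: enum_rank_inj.
  by rewrite !inE rho'E (inj_eq enum_rank_inj).
split.
  by move=> a b; apply/permP => i; rewrite -[i]enum_valK permM !rho'E rhoM permM.
move=> a b Eab; apply: rho_inj; apply/permP => x; apply: enum_rank_inj.
by rewrite -!rho'E Eab.
Qed.

Lemma rep_value_restrict (T : finType) (rho : gT -> {perm T}) (A : {set T}) :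
  {morph rho : x y / x * y} -> (forall h x, x \in A -> rho h x \in A) ->
  (forall a b, {in A, rho a =1 rho b} -> a = b) ->
  rep_value g (2 * #|A| - #|A :&: [set x | rho g x == x]|).
Proof.
move=> rhoM rhoA rhoA_inj.
pose rA h (x : {x | x \in A}) : {x | x \in A} :=
  exist _ (rho h (val x)) (rhoA h _ (valP x)).
have rA_inj h : injective (rA h) by move=> x y [] /perm_inj /val_inj.
pose rhoA' h := perm (rA_inj h).
have rhoA'E h x : val (rhoA' h x) = rho h (val x) by rewrite permE.
have := @rep_value_finType _ rhoA'; rewrite card_sig (@eq_card _ [pred x in A] A) //.
have -> : #|[set x | rhoA' g x == x]| = #|A :&: [set x | rho g x == x]|.
  rewrite -(card_imset _ val_inj); apply: eq_card => w; rewrite !inE.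
  apply/imsetP/andP => [[x] /[!inE] /eqP xg -> | [wA /eqP wg]].
    by rewrite -rhoA'E xg (valP x).
  by exists (exist _ w wA); rewrite // inE -(inj_eq val_inj) rhoA'E wg.
apply.
  by move=> a b; apply/permP => x; apply: val_inj; rewrite permM !rhoA'E rhoM permM.
move=> a b Eab; apply: rhoA_inj => w wA.
by rewrite -[w]/(val (exist _ w wA)) -!rhoA'E Eab.
Qed.

Lemma total_degree_finType (T : finType) (act : RM gT -> T -> T) :
  (forall s t x, act (rm_mul g s t) x = act t (act s x)) ->
  (forall s t, act s =1 act t -> s = t) ->
  has_total_degree g #|T|.
Proof.
move=> actM act_inj.
exists (fun s i => enum_rank (act s (enum_val i))); split.
  by move=> s t i; rewrite actM enum_rankK.
move=> s t Est; apply: act_inj => x; apply: enum_rank_inj.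
by have := Est (enum_rank x); rewrite enum_rankK.
Qed.

Lemma partial_degree_total m : has_total_degree g m -> has_partial_degree g m.
Proof.
case=> phi [phiM phi_inj]; exists (fun s x => Some (phi s x)); split.
  by move=> s t x; rewrite phiM.
by move=> s t Est; apply: phi_inj => x; case: (Est x).
Qed.

Lemma rep_value_regular : exists v, rep_value g v.
Proof.
pose rreg h : {perm gT} := perm (mulIg h).
eexists; apply: (@rep_value_finType gT rreg).
  by move=> a b; apply/permP => x; rewrite permM !permE mulgA.
by move=> a b /(congr1 (fun p : {perm gT} => p 1)); rewrite !permE !mul1g.
Qed.

End Transfer.

Section PartialActionLowerBound.
Variables (gT : finGroupType) (g : gT) (m : nat) (phi : RM gT -> 'I_m -> option 'I_m).
Hypothesis phiM : forall s t x, phi (rm_mul g s t) x = obind (phi t) (phi s x).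
Hypothesis phi_inj : forall s t, phi s =1 phi t -> s = t.

Let act11 h := phi (ord0, h, ord0).

Let act11M a b x : act11 (a * b) x = obind (act11 b) (act11 a x).
Proof. by rewrite -phiM /= mulg1. Qed.

Let Z1 := fix1 act11.
(* (2,g^-1,2) is the identity of the maximal subgroup of S at (2,2). *)
Let Z2 := [set x | phi (ord_max, g^-1, ord_max) x == Some x].
Let rep11 := fix1_perm act11M.

Lemma rep11_inj : injective rep11.
Proof.
move=> a b /fix1_perm_inj_act Eab.
by have [] : (ord0, a, ord0) = (ord0, b, ord0) :> RM gT by apply: phi_inj.
Qed.

(* z |-> z.(1,1,2) maps Z1 into Z2, with left inverse w |-> w.(2,g^-1,1). *)
Lemma card_Z1_le_Z2 : #|Z1| <= #|Z2|.
Proof.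
pose alpha z := odflt z (phi (ord0, 1, ord_max) z).
have alphaP z : z \in Z1 ->
    phi (ord_max, g^-1, ord0) (alpha z) = Some z /\ alpha z \in Z2.
  rewrite inE => /eqP z1.
  have := phiM (ord0, 1, ord_max) (ord_max, g^-1, ord0) z.
  rewrite /= mul1g mulgV -[phi _ z]/(act11 1 z) z1 /alpha.
  case Ez: (phi (ord0, 1, ord_max) z) => [w|] //= <-; split=> //.
  rewrite inE; have := phiM (ord0, 1, ord_max) (ord_max, g^-1, ord_max) z.
  by rewrite /= mul1g mulgV Ez /= => <-.
rewrite -(card_in_imset (f := alpha)); last first.
  move=> z1 z2 /alphaP[e1 _] /alphaP[e2 _] E.
  by apply: Some_inj; rewrite -e1 -e2 E.
by apply: subset_leq_card; apply/subsetP => _ /imsetP[z /alphaP[_ ?] ->].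
Qed.

(* (1,g,1) = (1,1,2)(2,1,1), and both factors fix every point of Z1 :&: Z2. *)
Lemma act11_g_fixed z : z \in Z1 -> z \in Z2 -> act11 g z = Some z.
Proof.
rewrite !inE /act11 => /eqP z1 /eqP z2.
have z3 : phi (ord0, g^-1, ord_max) z = Some z.
  have := phiM (ord0, 1, ord0) (ord_max, g^-1, ord_max) z.
  by rewrite /= !mul1g z1 /= z2.
have z4 : phi (ord_max, 1, ord0) z = Some z.
  have := phiM (ord0, g^-1, ord_max) (ord_max, 1, ord0) z.
  by rewrite /= mulg1 mulVg z1 z3 /= => <-.
have z5 : phi (ord0, 1, ord_max) z = Some z.
  have := phiM (ord_max, g^-1, ord_max) (ord0, 1, ord_max) z.
  by rewrite /= !mulg1 z2 /= => <-.
have := phiM (ord0, 1, ord_max) (ord_max, 1, ord0) z.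
by rewrite /= mulg1 mul1g z5 /= z4.
Qed.

Lemma rep_value_le_partial_action : exists2 v, rep_value g v & v <= m.
Proof.
eexists; first exact: rep_value_finType (fix1_permM act11M) rep11_inj.
have fixZ : #|Z1 :&: Z2| <= #|[set x | rep11 g x == x]|.
  rewrite -(card_imset _ val_inj); apply/subset_leq_card/subsetP => z.
  rewrite inE => /andP[z1 z2]; apply/imsetP; exists (exist _ z z1) => //.
  rewrite inE fix1_permE -(inj_eq val_inj) -(inj_eq Some_inj).
  by rewrite -(@fix1_actE _ _ _ act11M) act11_g_fixed.
have unionZ : #|Z1 :|: Z2| <= m by rewrite -[X in _ <= X](card_ord m) max_card.
have := cardsUI Z1 Z2; have := card_Z1_le_Z2.
rewrite card_sig (@eq_card _ [pred x in Z1] Z1) // -/rep11.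
lia.
Qed.

End PartialActionLowerBound.

Section GluedAction.
Variables (gT : finGroupType) (g : gT) (T : finType) (rho : gT -> {perm T}).
Hypotheses (rhoM : {morph rho : x y / x * y}) (rho_inj : injective rho).

Let F := [set w | rho g w == w].

(* inl w is the class of (1, w); inr w is that of (2, w) for w \notin F, while
   (2, w) with w \in F is identified with (1, w). *)
Local Notation glued := (T + {w | w \notin F})%type.

Definition glued_point (p : glued) : 'I_2 * T :=
  match p with inl w => (ord0, w) | inr w => (ord_max, val w) end.

Definition glue (q : 'I_2 * T) : glued :=
  if q.1 == ord0 then inl q.2
  else oapp inr (inl q.2) (insub q.2 : option {w | w \notin F}).

Definition glue_norm (q : 'I_2 * T) : 'I_2 * T :=
  (if q.2 \in F then ord0 else q.1, q.2).

Lemma glued_pointK q : glued_point (glue q) = glue_norm q.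
Proof.
case: q => k w; rewrite /glue /glue_norm /=.
case: (ord2P k) => -> /=; first by case: ifP.
by case: insubP => [u /negbTE-> <-|/negbNE->].
Qed.

Lemma card_glued : #|{: glued}| = 2 * #|T| - #|F|.
Proof.
rewrite card_sum card_sig (@eq_card _ [pred x | x \notin F] (~: F)) => [|w].
  by have := cardsC F; have := max_card F; lia.
by rewrite !inE.
Qed.

Definition pair_act (s : RM gT) (q : 'I_2 * T) : 'I_2 * T :=
  let: (i, h, j) := s in (j, rho (sandwich g q.1 i * h) q.2).

Lemma pair_actM s t q : pair_act (rm_mul g s t) q = pair_act t (pair_act s q).
Proof. by case: s t => [[i h] j] [[k h'] l]; rewrite /= -permM -rhoM !mulgA. Qed.

Lemma pair_act_norm s q : pair_act s (glue_norm q) = pair_act s q.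
Proof.
case: s q => [[i h] j] [k w]; rewrite /glue_norm /=; case: ifP => // /[!inE] /eqP wF.
rewrite sandwich0l !rhoM !permM (perm_rep1 rhoM) perm1.
by case: (sandwichP g k i) => ->; rewrite ?wF // (perm_rep1 rhoM) perm1.
Qed.

Definition glued_act s p := glue (pair_act s (glued_point p)).

Lemma glued_actM s t p : glued_act (rm_mul g s t) p = glued_act t (glued_act s p).
Proof. by rewrite /glued_act glued_pointK pair_act_norm pair_actM. Qed.

Lemma exists_nonfixed : g != 1 -> exists w, w \notin F.
Proof.
move=> g1; apply/existsP; apply: contraNT g1 => /existsPn noF.
rewrite -(inj_eq rho_inj) (perm_rep1 rhoM); apply/eqP/permP => w.
by have := noF w; rewrite negbK inE perm1 => /eqP.
Qed.

Lemma glued_act_faithful : g != 1 -> forall s t, glued_act s =1 glued_act t -> s = t.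
Proof.
move=> /exists_nonfixed[w0 w0F] [[i h] j] [[i' h'] j'] Est.
have E p : glue_norm (pair_act (i, h, j) (glued_point p)) =
           glue_norm (pair_act (i', h', j') (glued_point p)).
  by rewrite -!glued_pointK; congr glued_point; apply: Est.
have eh : h = h'.
  apply: rho_inj; apply/permP => w.
  by have := congr1 snd (E (inl w)); rewrite /= !sandwich0l !mul1g.
subst h'; have ej : j = j'.
  have := congr1 fst (E (inl (rho h^-1 w0))).
  by rewrite /= !sandwich0l !mul1g -permM -rhoM mulVg (perm_rep1 rhoM) perm1 (negbTE w0F).
subst j'; suff -> : i = i' by [].
have w0g : rho (g * h) w0 != rho h w0.
  by move: w0F; rewrite inE rhoM permM (inj_eq perm_inj).
have := congr1 snd (E (inr (exist _ w0 w0F))) => /=.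
case: (ord2P i) (ord2P i') => -> [] -> //; rewrite sandwich0r sandwich_max mul1g.
all: by move=> Eh; rewrite Eh eqxx in w0g.
Qed.

End GluedAction.

Section Orbits.
Variables (gT : finGroupType) (n : nat) (rho : gT -> {perm 'I_n}).
Hypothesis rhoM : {morph rho : x y / x * y}.

Lemma rep_orbit_act x z h : z \in rep_orbit rho x -> rho h z \in rep_orbit rho x.
Proof. by case/imsetP => a _ ->; rewrite -permM -rhoM; apply: imset_f. Qed.

Lemma rep_orbit_refl x : x \in rep_orbit rho x.
Proof. by apply/imsetP; exists 1; rewrite // (perm_rep1 rhoM) perm1. Qed.

Lemma rep_orbit_eq x z : z \in rep_orbit rho x -> rep_orbit rho z = rep_orbit rho x.
Proof.
move=> xz; apply/eqP; rewrite eqEsubset; apply/andP; split; apply/subsetP => w.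
  by case/imsetP => h _ ->; apply: rep_orbit_act.
case/imsetP: xz => a _ ->; case/imsetP => h _ ->.
by rewrite -[h](mulKVg a) rhoM permM; apply: imset_f.
Qed.

Lemma rep_orbit_actV x z h : (rho h z \in rep_orbit rho x) = (z \in rep_orbit rho x).
Proof.
apply/idP/idP; last exact: rep_orbit_act.
by move/(rep_orbit_act h^-1); rewrite -permM -rhoM mulgV (perm_rep1 rhoM) perm1.
Qed.

End Orbits.

(* Any element acting trivially off the orbit of y acts trivially on the orbit of x,
   hence, through the isomorphism, on the orbit of y: that orbit can be deleted. *)
Lemma rep_value_drop_iso_orbit
    (gT : finGroupType) (g : gT) n (rho : gT -> {perm 'I_n}) x y :
  faithful_perm_rep rho -> rep_orbit rho x != rep_orbit rho y -> iso_orbits rho x y ->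
  exists2 v, rep_value g v & v < 2 * n - #|fixpts (rho g)|.
Proof.
move=> [rhoM rho_inj] Oxy [f [_ _ f_onto f_equiv]].
pose O := rep_orbit rho y; pose F := fixpts (rho g).
have Ox_offO z : z \in rep_orbit rho x -> z \notin O.
  move=> xz; apply: contra Oxy => yz.
  by rewrite -(rep_orbit_eq rhoM xz) (rep_orbit_eq rhoM yz).
exists (2 * #|~: O| - #|~: O :&: F|).
  apply: (@rep_value_restrict _ g _ rho (~: O) rhoM) => [h z | a b Eab].
    by rewrite !inE (rep_orbit_actV rhoM).
  apply: rho_inj; apply/permP => w.
  have [yw | wO] := boolP (w \in O); last by apply: Eab; rewrite inE.
  have [z xz <-] := f_onto w yw.
  by rewrite -!f_equiv // Eab // inE Ox_offO.
have cardO : 0 < #|O| by apply/card_gt0P; exists y; apply: rep_orbit_refl.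
have := subset_leq_card (subsetIl (~: O) F); have := subset_leq_card (subsetIr F O).
have := cardsID O F; have := cardsC O; rewrite card_ord setDE (setIC F (~: O)) -/F.
lia.
Qed.

Lemma total_degree_of_rep (gT : finGroupType) (g : gT) n (rho : gT -> {perm 'I_n}) :
  g != 1 -> faithful_perm_rep rho -> has_total_degree g (2 * n - #|fixpts (rho g)|).
Proof.
move=> g1 [rhoM rho_inj]; rewrite -[n in (2 * n)%N]card_ord -card_glued.
exact: total_degree_finType (glued_actM rhoM) (glued_act_faithful rhoM rho_inj g1).
Qed.

Lemma is_least_exists (P : nat -> Prop) n : P n -> exists d, is_least P d.
Proof.
elim/ltn_ind: n => n IHn Pn.
have [[m [lt_mn Pm]] | no_less] := classic (exists m, m < n /\ P m); first exact: IHn Pm.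
exists n; split=> // m Pm; rewrite leqNgt; apply/negP => lt_mn.
by apply: no_less; exists m.
Qed.

Theorem corollary2p17 (gT : finGroupType) (g : gT) (hg : g != 1) :
  exists d : nat,
    [/\ is_least (rep_value g) d,
        is_least (rep_value_noiso g) d,
        is_least (has_partial_degree g) d
      & is_least (has_total_degree g) d].
Proof.
have [v0 /is_least_exists[d [[n [rho [rho_faithful Ed]]] d_min]]] := rep_value_regular g.
have partial_ge m : has_partial_degree g m -> d <= m.
  case=> phi [phiM phi_inj]; have [v /d_min] := rep_value_le_partial_action phiM phi_inj.
  exact: leq_trans.
have total_d : has_total_degree g d by rewrite Ed; apply: total_degree_of_rep.
exists d; split.
- by split=> //; exists n, rho.
- split=> [|m [n' [rho' [rho'_faithful _ ->]]]]; last by apply: d_min; exists n', rho'.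
  exists n, rho; split=> // x y Oxy.
  move=> /(rep_value_drop_iso_orbit g rho_faithful Oxy)[v /d_min].
  by rewrite Ed leqNgt => /negP.
- by split=> [|m]; [exact: partial_degree_total | exact: partial_ge].
- by split=> // m /partial_degree_total; exact: partial_ge.
Qed.
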